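(* Consider a neutral evolutionary model on $N$ sites given by a replacement rule $p$ satisfying the fixation assumption described in the context, with replacement probabilities $e_{ij}$, birth rates $b_i$, death rates $d_i$, total birth rate $B>0$, site-specific fixation probabilities $\rho_i$, overall fixation probability $\rho=\frac{1}{B}\sum_{i=1}^N d_i\rho_i$ and molecular clock rate $K=Nu\rho$ (for a mutation probability $u>0$ per reproduction). Then $\rho_i=1/N$ for all $i=1,\ldots,N$ if and only if $b_i=d_i$ for all $i=1,\ldots,N$. In particular, if $b_i=d_i$ for all $i$, then $\rho=1/N$ and consequently $K=u$.
   Context: There are $N$ sites $1,\ldots,N$, each always occupied by one individual of type M (mutant) or R (resident); a state is $\mathbf{s}\in\{\mathrm{M},\mathrm{R}\}^N$. A replacement event is a pair $(R,\alpha)$ with $R\subseteq\{1,\ldots,N\}$ and $\alpha:R\to\{1,\ldots,N\}$. A replacement rule is a probability distribution $p(R,\alpha)$ on replacement events, independent of the state. The evolutionary Markov chain: at each time-step an event $(R,\alpha)$ is drawn with probability $p(R,\alpha)$ and the new state is $s_i'=s_i$ if $i\notin R$, $s_i'=s_{\alpha(i)}$ if $i\in R$. Fixation assumption: there exist a site $i$ and a finite sequence of replacement events, each of positive probability, such that if these events occur consecutively (from any initial state) every site ends up carrying the type initially at site $i$. Define $e_{ij}=\sum_{(R,\alpha):\, j\in R,\ \alpha(j)=i}p(R,\alpha)$, $b_i=\sum_j e_{ij}$, $d_i=\sum_j e_{ji}$, $B=\sum_{i,j}e_{ij}$. The site-specific fixation probability $\rho_i$ is the probability that the chain started from the state with M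 at site $i$ and R elsewhere is eventually absorbed in $(\mathrm{M},\ldots,\mathrm{M})$. *)

From HB Require Import structures.
From mathcomp Require Import all_boot all_order all_algebra.
From mathcomp Require Import all_classical all_reals all_analysis.
Set Implicit Arguments. Unset Strict Implicit. Unset Printing Implicit Defensive.
Import Order.TTheory GRing.Theory Num.Theory.
Import numFieldNormedType.Exports.
Local Open Scope ring_scope.

(* A state: true = M (mutant), false = R (resident). *)
Definition state (N : nat) : finType := {ffun 'I_N -> bool}.

(* A replacement event (R, alpha).  alpha : R -> sites is represented by a total
   function on sites; only its values on R are ever used. *)
Definition event (N : nat) : finType := ({set 'I_N} * {ffun 'I_N -> 'I_N})%type.

Definition apply_event (N : nat) (ev : event N) (s : state N) : state N :=
  [ffun j => if j \in ev.1 then s (ev.2 j) else s j].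

Definition apply_events (N : nat) (es : seq (event N)) (s : state N) : state N :=
  foldl (fun s ev => apply_event ev s) s es.

Definition is_replacement_rule (R : realType) (N : nat) (p : event N -> R) : Prop :=
  (forall ev, 0 <= p ev) /\ \sum_(ev : event N) p ev = 1.

Definition fixation_assumption (R : realType) (N : nat) (p : event N -> R) : Prop :=
  exists (i : 'I_N) (es : seq (event N)),
    (forall ev, ev \in es -> 0 < p ev) /\
    (forall s : state N, apply_events es s = [ffun _ => s i]).

(* e_ij : probability that the offspring of i replaces j. *)
Definition e_rate (R : realType) (N : nat) (p : event N -> R) (i j : 'I_N) : R :=
  \sum_(ev : event N | (j \in ev.1) && (ev.2 j == i)) p ev.

Definition birth_rate (R : realType) (N : nat) (p : event N -> R) (i : 'I_N) : R :=
  \sum_(j < N) e_rate p i j.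

Definition death_rate (R : realType) (N : nat) (p : event N -> R) (i : 'I_N) : R :=
  \sum_(j < N) e_rate p j i.

Definition total_birth (R : realType) (N : nat) (p : event N -> R) : R :=
  \sum_(i < N) \sum_(j < N) e_rate p i j.

Definition trans (R : realType) (N : nat) (p : event N -> R) (s s' : state N) : R :=
  \sum_(ev : event N | apply_event ev s == s') p ev.

Fixpoint trans_n (R : realType) (N : nat) (p : event N -> R) (t : nat)
    (s s' : state N) : R :=
  match t with
  | 0 => (s == s')%:R
  | t'.+1 => \sum_(s'' : state N) trans_n p t' s s'' * trans p s'' s'
  end.

Definition allM (N : nat) : state N := [ffun _ => true].
Definition single_mutant (N : nat) (i : 'I_N) : state N := [ffun j => j == i].

(* Probability of eventual absorption in allM starting from s: since allM is
   absorbing, this is the (monotone) limit of P(X_t = allM). *)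
Definition absorb_prob (R : realType) (N : nat) (p : event N -> R) (s : state N) : R :=
  limn (fun t => trans_n p t s (allM N)).

Definition rho_site (R : realType) (N : nat) (p : event N -> R) (i : 'I_N) : R :=
  absorb_prob p (single_mutant i).

Definition rho_overall (R : realType) (N : nat) (p : event N -> R) : R :=
  (total_birth p)^-1 * \sum_(i < N) death_rate p i * rho_site p i.

Definition clock_rate (R : realType) (N : nat) (p : event N -> R) (u : R) : R :=
  N%:R * u * rho_overall p.

From HB Require Import structures.
From mathcomp Require Import all_boot all_order all_algebra.
From mathcomp Require Import all_classical all_reals all_analysis.
From mathcomp Require Import lra.
Import Order.TTheory GRing.Theory Num.Theory.
Import numFieldNormedType.Exports.
Local Open Scope classical_set_scope.
Local Open Scope ring_scope.

(* The chain is absorbed in one of the two monomorphic states, since along the path of the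
   fixation assumption the probability of still being polymorphic shrinks geometrically.
   Hence the probability [mutant_prob t s j] that site [j] carries M at time [t] tends to the
   absorption probability of [s], whatever [j]. As [mutant_prob] evolves by the linear map
   [mean_step], absorption probabilities are additive over mutant sites:
   absorb(s) = sum_(i in s) rho_i. One step changes the expected number of mutants by
   sum_j (b_j - d_j) x_j. If b = d this number is conserved, so starting from a single
   mutant at i we get 1 = sum_j mutant_prob -> N rho_i. Conversely, conditioning on the first
   step, rho_k = sum_i P(site i is M after one step) rho_i, which for rho = 1/N equals
   (1 + b_k - d_k) / N. *)

Lemma cvgn_sum {R : numFieldType} {I : finType} (f : I -> nat -> R) (a : I -> R) :
  (forall i, f i t @[t --> \oo] --> a i) -> \sum_i f i t @[t --> \oo] --> \sum_i a i.
Proof. by move=> cvg_f; apply: cvg_big => // -[x y]; apply: add_continuous. Qed.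

Lemma natr_ord_neq0 {R : numDomainType} {N} (i : 'I_N) : N%:R != 0 :> R.
Proof. by rewrite pnatr_eq0 -lt0n (leq_ltn_trans _ (ltn_ord i)). Qed.

Lemma sum_single_mutant {R : pzSemiRingType} {N} (k : 'I_N) (F : 'I_N -> R) :
  \sum_i ((single_mutant k) i)%:R * F i = F k.
Proof.
rewrite (bigD1 k) //= ffunE eqxx mul1r big1 ?addr0 // => i /negbTE ne.
by rewrite ffunE ne mul0r.
Qed.

Section EvolutionaryChain.
Variables (R : realType) (N : nat) (p : event N -> R).

Lemma sum_trans_apply (s : state N) (f : state N -> R) :
  \sum_(s' : state N) trans p s s' * f s' = \sum_(ev : event N) p ev * f (apply_event ev s).
Proof.
rewrite [RHS](partition_big (fun ev => apply_event ev s) xpredT) //=.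
by apply: eq_bigr => s' _; rewrite /trans mulr_suml; apply: eq_bigr => ev /eqP ->.
Qed.

Lemma trans_nD t m s s' :
  trans_n p (t + m) s s' = \sum_(r : state N) trans_n p t s r * trans_n p m r s'.
Proof.
elim: m s' => [|m IH] s' /=.
  rewrite addn0 (bigD1 s') //= eqxx mulr1 big1 ?addr0 // => r /negbTE.
  by rewrite eq_sym => ->; rewrite mulr0.
rewrite addnS /=; under eq_bigr do rewrite IH mulr_suml.
rewrite exchange_big /=; apply: eq_bigr => r _; rewrite mulr_sumr.
by apply: eq_bigr => q _; rewrite mulrA.
Qed.

Lemma trans_n1 s s' : trans_n p 1 s s' = trans p s s'.
Proof.
rewrite /= (bigD1 s) //= eqxx mul1r big1 ?addr0 // => r /negbTE.
by rewrite eq_sym => ->; rewrite mul0r.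
Qed.

Lemma trans_nSl t s s' :
  trans_n p t.+1 s s' = \sum_(r : state N) trans p s r * trans_n p t r s'.
Proof. by rewrite -add1n trans_nD; apply: eq_bigr => r _; rewrite trans_n1. Qed.

Hypothesis hp : is_replacement_rule p.
Let p_ge0 : forall ev, 0 <= p ev := proj1 hp.

Lemma trans_ge0 s s' : 0 <= trans p s s'.
Proof. exact: sumr_ge0. Qed.

Lemma trans_n_ge0 t s s' : 0 <= trans_n p t s s'.
Proof.
elim: t s' => [|t IH] s' /=; first exact: ler0n.
by apply: sumr_ge0 => r _; rewrite mulr_ge0 ?trans_ge0.
Qed.

Lemma sum_trans s : \sum_(s' : state N) trans p s s' = 1.
Proof.
have := sum_trans_apply s (fun _ => 1); under eq_bigr do rewrite mulr1.
by move=> ->; under eq_bigr do rewrite mulr1; exact: (proj2 hp).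
Qed.

Lemma sum_trans_n t s : \sum_(s' : state N) trans_n p t s s' = 1.
Proof.
elim: t => [|t IH] /=.
  by rewrite (bigD1 s) //= eqxx big1 ?addr0 // => s' /negbTE; rewrite eq_sym => ->.
rewrite exchange_big /= -[RHS]IH; apply: eq_bigr => r _.
by rewrite -mulr_sumr sum_trans mulr1.
Qed.

Lemma trans_n_le1 t s s' : trans_n p t s s' <= 1.
Proof.
rewrite -(sum_trans_n t s) (bigD1 s') //= lerDl.
by apply: sumr_ge0 => r _; apply: trans_n_ge0.
Qed.

Definition const_state (b : bool) : state N := [ffun _ => b].

Definition fixated (s : state N) := (s == const_state true) || (s == const_state false).

Definition unfixed_prob t s := \sum_(s' : state N | ~~ fixated s') trans_n p t s s'.

Lemma apply_event_const ev b : apply_event ev (const_state b) = const_state b.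
Proof. by apply/ffunP => j; rewrite !ffunE; case: ifP. Qed.

Lemma trans_n_const t b s' : trans_n p t (const_state b) s' = (const_state b == s')%:R.
Proof.
elim: t s' => [|t IH] s' //=.
rewrite (bigD1 (const_state b)) //= IH eqxx mul1r big1 ?addr0; last first.
  by move=> r /negbTE; rewrite IH eq_sym => ->; rewrite mul0r.
rewrite /trans; under eq_bigl do rewrite apply_event_const.
by case: eqP => _; [exact: (proj2 hp) | exact: big_pred0_eq].
Qed.

Lemma unfixed_prob_const t b : unfixed_prob t (const_state b) = 0.
Proof.
apply: big1 => s'; rewrite trans_n_const.
by case: eqP => // <-; case: b; rewrite /fixated eqxx ?orbT.
Qed.

Lemma unfixed_prob_ge0 t s : 0 <= unfixed_prob t s.
Proof. by apply: sumr_ge0 => s' _; apply: trans_n_ge0. Qed.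

Lemma unfixed_prob_le1 t s : unfixed_prob t s <= 1.
Proof.
rewrite -(sum_trans_n t s) [leRHS](bigID (fun s' => ~~ fixated s')) /= lerDl.
by apply: sumr_ge0 => s' _; apply: trans_n_ge0.
Qed.

Lemma unfixed_probD t m c s : (forall r, unfixed_prob m r <= c) ->
  unfixed_prob (t + m) s <= c * unfixed_prob t s.
Proof.
move=> hc.
have -> : unfixed_prob (t + m) s = \sum_(r : state N) trans_n p t s r * unfixed_prob m r.
  rewrite /unfixed_prob; under eq_bigr do rewrite trans_nD.
  by rewrite exchange_big /=; apply: eq_bigr => r _; rewrite mulr_sumr.
rewrite (bigID fixated) /= big1 ?add0r; last first.
  by move=> r /orP[] /eqP ->; rewrite unfixed_prob_const mulr0.
rewrite /unfixed_prob mulr_sumr; apply: ler_sum => r _.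
by rewrite mulrC; apply: ler_wpM2r; [apply: trans_n_ge0 | apply: hc].
Qed.

Lemma prod_le_trans_n_apply_events (es : seq (event N)) r :
  \prod_(ev <- es) p ev <= trans_n p (size es) r (apply_events es r).
Proof.
elim: es r => [|ev es IH] r; first by rewrite big_nil /= eqxx.
rewrite big_cons trans_nSl (bigD1 (apply_event ev r)) //= -[leLHS]addr0.
apply: lerD; last by apply: sumr_ge0 => q _; rewrite mulr_ge0 ?trans_ge0 ?trans_n_ge0.
apply: ler_pM => //; first by apply: prodr_ge0.
by rewrite /trans (bigD1 ev) //= lerDl; apply: sumr_ge0.
Qed.

Lemma unfixed_prob_fixation_path (i : 'I_N) (es : seq (event N)) r :
  (forall s, apply_events es s = [ffun _ => s i]) ->
  unfixed_prob (size es) r <= 1 - \prod_(ev <- es) p ev.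
Proof.
move=> hes; set q := apply_events es r.
have fix_q : fixated q by rewrite /q hes /fixated; case: (r i); rewrite eqxx ?orbT.
rewrite -[X in X - _](sum_trans_n (size es) r) (bigD1 q) //= addrAC -[leLHS]add0r.
apply: lerD; first by rewrite subr_ge0; exact: prod_le_trans_n_apply_events.
rewrite /unfixed_prob big_mkcond [leRHS]big_mkcond /=; apply: ler_sum => s' _.
have [->|_] := eqVneq s' q; first by rewrite fix_q.
by case: ifP => // _; apply: trans_n_ge0.
Qed.

Lemma absorb_prob_cvg s : trans_n p t s (allM N) @[t --> \oo] --> absorb_prob p s.
Proof.
apply: nondecreasing_is_cvgn; last by exists 1 => _ [t _ <-]; apply: trans_n_le1.
have allM_stays : trans p (allM N) (allM N) = 1.
  by rewrite -trans_n1 (trans_n_const 1 true) eqxx.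
apply/nondecreasing_seqP => t /=; rewrite (bigD1 (allM N)) //= allM_stays mulr1 lerDl.
apply: sumr_ge0 => r _; rewrite mulr_ge0 ?trans_n_ge0 ?trans_ge0 //.
Qed.

Hypothesis hfix : fixation_assumption p.

Lemma unfixed_prob_cvg0 s : unfixed_prob t s @[t --> \oo] --> 0.
Proof.
have [i [es [es_pos es_fix]]] := hfix.
set d := \prod_(ev <- es) p ev.
have d_gt0 : 0 < d by rewrite /d big_seq; apply: prodr_gt0.
have dec : nonincreasing_seq (unfixed_prob ^~ s).
  apply/nonincreasing_seqP => t; rewrite -addn1.
  by rewrite -[leRHS]mul1r unfixed_probD // => r; apply: unfixed_prob_le1.
have bounded : has_lbound (range (unfixed_prob ^~ s)).
  by exists 0 => _ [t _ <-]; apply: unfixed_prob_ge0.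
have := nonincreasing_cvgn dec bounded; set l := inf _ => cvg_l.
have l_ge0 : 0 <= l.
  by apply: (ler_cvg_to (cvg_cst 0) cvg_l); apply: nearW => t; apply: unfixed_prob_ge0.
suff l_le : l <= (1 - d) * l by rewrite (_ : 0 = l) //; nra.
have cvg_shift : unfixed_prob (t + size es) s @[t --> \oo] --> l.
  by rewrite (cvg_shiftn (size es) (unfixed_prob ^~ s)).
apply: (ler_cvg_to cvg_shift (cvgMl_tmp (a := 1 - d) cvg_l)).
apply: nearW => t; apply: unfixed_probD => r.
exact: unfixed_prob_fixation_path es_fix.
Qed.

Definition mutant_prob t s (j : 'I_N) :=
  \sum_(s' : state N) trans_n p t s s' * (s' j)%:R.

Lemma mutant_prob_bounds t s j :
  trans_n p t s (allM N) <= mutant_prob t s j <= trans_n p t s (allM N) + unfixed_prob t s.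
Proof.
apply/andP; split.
  rewrite /mutant_prob (bigD1 (allM N)) //= ffunE mulr1 lerDl.
  by apply: sumr_ge0 => r _; rewrite mulr_ge0 ?trans_n_ge0.
have -> : trans_n p t s (allM N) + unfixed_prob t s =
    \sum_(s' : state N) trans_n p t s s' * ((s' == allM N)%:R + (~~ fixated s')%:R).
  under [RHS]eq_bigr do rewrite mulrDr; rewrite big_split /=; congr (_ + _).
    rewrite (bigD1 (allM N)) //= eqxx mulr1 big1 ?addr0 // => r /negbTE ->.
    by rewrite mulr0.
  rewrite /unfixed_prob big_mkcond; apply: eq_bigr => r _.
  by case: ifP; rewrite ?mulr1 ?mulr0.
apply: ler_sum => s' _; rewrite ler_wpM2l ?trans_n_ge0 //.
have [->|not_allM] := eqVneq s' (allM N); first by rewrite ffunE lerDl.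
have [->|not_allR] := eqVneq s' (const_state false); first by rewrite ffunE addr_ge0.
by rewrite /fixated (negbTE not_allR) orbF not_allM add0r lern1 leq_b1.
Qed.

Lemma mutant_prob_cvg s j : mutant_prob t s j @[t --> \oo] --> absorb_prob p s.
Proof.
apply: (@squeeze_cvgr _ _ _ _ (fun t => trans_n p t s (allM N))
  (fun t => trans_n p t s (allM N) + unfixed_prob t s)).
- by apply: nearW => t; apply: mutant_prob_bounds.
- exact: absorb_prob_cvg.
- rewrite -[absorb_prob p s]addr0.
  by apply: cvgD; [apply: absorb_prob_cvg | apply: unfixed_prob_cvg0].
Qed.

Definition mean_step (x : 'I_N -> R) (j : 'I_N) :=
  \sum_(ev : event N) p ev * x (if j \in ev.1 then ev.2 j else j).

Lemma mutant_prob0 s j : mutant_prob 0 s j = (s j)%:R.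
Proof.
rewrite /mutant_prob (bigD1 s) //= eqxx mul1r big1 ?addr0 // => r /negbTE.
by rewrite eq_sym => ->; rewrite mul0r.
Qed.

Lemma mutant_probS t s j : mutant_prob t.+1 s j = mean_step (mutant_prob t s) j.
Proof.
rewrite /mutant_prob /mean_step /=.
transitivity (\sum_(r : state N) trans_n p t s r *
                \sum_(ev : event N) p ev * ((apply_event ev r) j)%:R).
  under eq_bigr do rewrite mulr_suml.
  rewrite exchange_big /=; apply: eq_bigr => r _.
  rewrite -(sum_trans_apply r (fun s' => (s' j)%:R)) mulr_sumr.
  by apply: eq_bigr => s' _; rewrite mulrA.
under eq_bigr do rewrite mulr_sumr.
rewrite exchange_big /=; apply: eq_bigr => ev _; rewrite mulr_sumr.
by apply: eq_bigr => r _; rewrite ffunE -fun_if mulrCA.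
Qed.

Lemma mean_step_sum (I : finType) (c : I -> R) (y : I -> 'I_N -> R) j :
  mean_step (fun k => \sum_i c i * y i k) j = \sum_i c i * mean_step (y i) j.
Proof.
rewrite /mean_step; under eq_bigr do rewrite mulr_sumr.
rewrite exchange_big /=; apply: eq_bigr => i _; rewrite mulr_sumr.
by apply: eq_bigr => ev _; rewrite mulrCA.
Qed.

Lemma mutant_prob_sites t s j :
  mutant_prob t s j = \sum_i (s i)%:R * mutant_prob t (single_mutant i) j.
Proof.
elim: t j => [|t IH] j.
  rewrite mutant_prob0; under eq_bigr do rewrite mutant_prob0 ffunE.
  rewrite (bigD1 j) //= eqxx mulr1 big1 ?addr0 // => i /negbTE.
  by rewrite eq_sym => ->; rewrite mulr0.
rewrite mutant_probS; under eq_bigr do rewrite mutant_probS.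
by rewrite -mean_step_sum; congr mean_step; apply: funext => k; apply: IH.
Qed.

Lemma sum_replacing_parent j (x : 'I_N -> R) :
  \sum_(ev : event N | j \in ev.1) p ev * x (ev.2 j) = \sum_i e_rate p i j * x i.
Proof.
rewrite (partition_big (fun ev : event N => ev.2 j) xpredT) //=.
by apply: eq_bigr => i _; rewrite /e_rate mulr_suml; apply: eq_bigr => ev /andP[_ /eqP ->].
Qed.

Lemma mean_stepE x j :
  mean_step x j = x j - death_rate p j * x j + \sum_i e_rate p i j * x i.
Proof.
have replaced : \sum_(ev : event N | j \in ev.1) p ev = death_rate p j.
  have := sum_replacing_parent j (fun _ => 1); under eq_bigr do rewrite mulr1.
  by move=> ->; apply: eq_bigr => i _; rewrite mulr1.
have kept : \sum_(ev : event N | j \notin ev.1) p ev = 1 - death_rate p j.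
  rewrite -(proj2 hp) (bigID (fun ev : event N => j \in ev.1) xpredT) /= replaced.
  by rewrite addrAC subrr add0r.
rewrite /mean_step (bigID (fun ev : event N => j \in ev.1)) /=.
under eq_bigr => ev -> do [].
under [X in _ + X]eq_bigr => ev /negbTE -> do [].
by rewrite sum_replacing_parent -mulr_suml kept mulrBl mul1r addrC.
Qed.

Lemma sum_mean_step x :
  \sum_j mean_step x j = \sum_j x j + \sum_j (birth_rate p j - death_rate p j) * x j.
Proof.
under eq_bigr do rewrite mean_stepE.
rewrite !big_split /= exchange_big /= -addrA; congr (_ + _).
under [in RHS]eq_bigr do rewrite mulrBl /birth_rate mulr_suml.
by rewrite big_split /= sumrN addrC.
Qed.

Lemma absorb_prob_trans_n t s :
  absorb_prob p s = \sum_(r : state N) trans_n p t s r * absorb_prob p r.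
Proof.
have cvg_shift : trans_n p (m + t) s (allM N) @[m --> \oo] --> absorb_prob p s.
  by rewrite (cvg_shiftn t (fun m => trans_n p m s (allM N))); apply: absorb_prob_cvg.
suff cvg_sum : trans_n p (m + t) s (allM N) @[m --> \oo] -->
    \sum_(r : state N) trans_n p t s r * absorb_prob p r.
  exact: cvg_unique _ cvg_shift cvg_sum.
under eq_fun do rewrite addnC trans_nD.
by apply: cvgn_sum => r; apply: cvgMl_tmp; apply: absorb_prob_cvg.
Qed.

Lemma absorb_prob_sites s : absorb_prob p s = \sum_i (s i)%:R * rho_site p i.
Proof.
have [j _] := hfix.
suff cvg_sum : mutant_prob t s j @[t --> \oo] --> \sum_i (s i)%:R * rho_site p i.
  exact: cvg_unique _ (mutant_prob_cvg s j) cvg_sum.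
under eq_fun do rewrite mutant_prob_sites.
by apply: cvgn_sum => i; apply: cvgMl_tmp; apply: mutant_prob_cvg.
Qed.

Lemma absorb_prob_mutant_prob t s :
  absorb_prob p s = \sum_i mutant_prob t s i * rho_site p i.
Proof.
rewrite (absorb_prob_trans_n t); under eq_bigr do rewrite absorb_prob_sites mulr_sumr.
rewrite exchange_big /=; apply: eq_bigr => i _; rewrite /mutant_prob mulr_suml.
by apply: eq_bigr => r _; rewrite mulrA.
Qed.

Section BirthEqDeath.
Hypothesis birth_eq_death : forall i, birth_rate p i = death_rate p i.

Lemma sum_mutant_prob_conserved t s : \sum_j mutant_prob t s j = \sum_j (s j)%:R.
Proof.
elim: t => [|t IH]; first by under eq_bigr do rewrite mutant_prob0.
under eq_bigr do rewrite mutant_probS.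
rewrite sum_mean_step IH [X in _ + X]big1 ?addr0 // => j _.
by rewrite birth_eq_death subrr mul0r.
Qed.

Lemma rho_site_uniform i : rho_site p i = N%:R^-1.
Proof.
have total_one t : \sum_j mutant_prob t (single_mutant i) j = 1.
  rewrite sum_mutant_prob_conserved -[RHS](sum_single_mutant i (fun _ => 1)).
  by apply: eq_bigr => j _; rewrite mulr1.
have cvg_rho :
    \sum_j mutant_prob t (single_mutant i) j @[t --> \oo] --> \sum_(j < N) rho_site p i.
  by apply: cvgn_sum => j; apply: mutant_prob_cvg.
have cvg_one : \sum_j mutant_prob t (single_mutant i) j @[t --> \oo] --> (1 : R).
  by under eq_fun do rewrite total_one; apply: cvg_cst.
have sum_rho : \sum_(j < N) rho_site p i = 1 by exact: cvg_unique _ cvg_rho cvg_one.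
rewrite sumr_const card_ord -mulr_natl in sum_rho.
by rewrite -[LHS](mulKf (natr_ord_neq0 i)) sum_rho mulr1.
Qed.

End BirthEqDeath.

Lemma birth_eq_death_of_rho_site (rho_uniform : forall i, rho_site p i = N%:R^-1) k :
  birth_rate p k = death_rate p k.
Proof.
have : rho_site p k = N%:R^-1 * (1 + (birth_rate p k - death_rate p k)).
  rewrite /rho_site (absorb_prob_mutant_prob 1).
  under eq_bigr do rewrite rho_uniform mulrC mutant_probS.
  rewrite -mulr_sumr sum_mean_step; congr (_ * (_ + _)).
    rewrite -[RHS](sum_single_mutant k (fun _ => 1)).
    by apply: eq_bigr => j _; rewrite mutant_prob0 mulr1.
  rewrite -[RHS](sum_single_mutant k (fun j => birth_rate p j - death_rate p j)).
  by apply: eq_bigr => j _; rewrite mutant_prob0 mulrC.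
rewrite rho_uniform -[X in X = _]mulr1 => /(mulfI (invr_neq0 (natr_ord_neq0 k))) /eqP.
by rewrite addrC -subr_eq subrr eq_sym subr_eq0 => /eqP.
Qed.

End EvolutionaryChain.

Lemma sum_death_rate {R : realType} {N} (p : event N -> R) :
  \sum_i death_rate p i = total_birth p.
Proof. by rewrite /total_birth exchange_big. Qed.

Lemma rho_overall_const {R : realType} {N} (p : event N -> R) (c : R) :
  total_birth p != 0 -> (forall i, rho_site p i = c) -> rho_overall p = c.
Proof.
move=> B_neq0 rho_c; rewrite /rho_overall; under eq_bigr do rewrite rho_c.
by rewrite -mulr_suml sum_death_rate mulKf.
Qed.

Theorem mainTheorem2 (R : realType) (N : nat) (p : event N -> R) (u : R)
    (hp : is_replacement_rule p) (hfix : fixation_assumption p)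
    (hB : 0 < total_birth p) (hu : 0 < u) :
  ((forall i : 'I_N, rho_site p i = N%:R^-1) <->
   (forall i : 'I_N, birth_rate p i = death_rate p i)) /\
  ((forall i : 'I_N, birth_rate p i = death_rate p i) ->
   rho_overall p = N%:R^-1 /\ clock_rate p u = u).
Proof.
split.
  split; [exact: birth_eq_death_of_rho_site | exact: rho_site_uniform].
move=> birth_eq_death.
have rho_eq : rho_overall p = N%:R^-1.
  by apply: rho_overall_const; [rewrite gt_eqF | exact: rho_site_uniform].
split=> //; have [i0 _] := hfix.
by rewrite /clock_rate rho_eq mulrAC mulfV ?mul1r // natr_ord_neq0.
Qed.
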